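(* For each environment $i\in\{1,\dots,N\}$ let $L_i>0$ be a constant such that $\|\mu^{\pi_1}_i-\mu^{\pi_2}_i\|_2\le L_i\|\pi_1-\pi_2\|_2$ for all $\pi_1,\pi_2\in\Pi$, and let $L=\max_{i}L_i$. Then for all $\pi_1,\pi_2\in\Pi$ and all $\beta\in\Delta_N$, $$|V_\beta(\pi_1)-V_\beta(\pi_2)|\le n_c\,L\,\sqrt{|\mathcal{S}||\mathcal{A}|}\,\|\pi_1-\pi_2\|_2 .$$
   Context: Let $\mathcal{S},\mathcal{A}$ be finite sets, $\gamma\in(0,1)$, $\rho$ a probability distribution on $\mathcal{S}$, and for $i=1,\dots,N$ let environment $i$ be the Markov decision process $(\mathcal{S},\mathcal{A},P^i,\gamma,\rho)$ with transition kernel $P^i$. $\Pi$ is the set of stationary policies $\pi:\mathcal{S}\to\Delta(\mathcal{A})$, with $\pi(s,a)$ the probability of $a$ at $s$, identified with vectors in $\mathbb{R}^{|\mathcal{S}||\mathcal{A}|}$. For $\pi\in\Pi$, $\mu^\pi_i(s,a)=\sum_{t\ge0}\gamma^t\mathbb{P}^{\pi,i}_\rho[s_t=s,a_t=a]$ is the discounted occupation measure, where $\mathbb{P}^{\pi,i}_\rho$ is the trajectory law with $s_0\sim\rho$, $a_t\sim\pi(s_t,\cdot)$, $s_{t+1}\sim P^i(\cdot\mid s_t,a_t)$. For each $i$ an expert policy $\pi^{E_i}\in\Pi$ is given. The cost basis matrix is $\Phi=[\phi_1,\dots,\phi_{n_c}]\in\mathbb{R}^{|\mathcal{S}||\mathcal{A}|\times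 n_c}$ with $\|\phi_j\|_\infty\le1$ for all $j$. $\Delta_N=\{\beta\in\mathbb{R}^N_{\ge0}:\sum_i\beta_i=1\}$. The performance function is $V_\beta(\pi)=\sum_{i=1}^N\beta_i\|\Phi^\top\mu^\pi_i-\Phi^\top\mu^{\pi^{E_i}}_i\|_1$. *)

From HB Require Import structures.
From mathcomp Require Import all_boot all_order all_algebra.
From mathcomp Require Import all_classical all_reals all_analysis.
Set Implicit Arguments. Unset Strict Implicit. Unset Printing Implicit Defensive.
Import Order.TTheory GRing.Theory Num.Theory.
Import numFieldNormedType.Exports.
Local Open Scope ring_scope.

Section Defs.
Variables (R : realType) (S A : finType).

Definition is_distr (rho : S -> R) : Prop :=
  (forall s, 0 <= rho s) /\ \sum_s rho s = 1.

Definition is_kernel (P : S -> A -> S -> R) : Prop :=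
  forall s a, (forall s', 0 <= P s a s') /\ \sum_s' P s a s' = 1.

Definition is_policy (pi : S -> A -> R) : Prop :=
  forall s, (forall a, 0 <= pi s a) /\ \sum_a pi s a = 1.

(* Marginal law of s_t under P^{pi}_rho (s_0 ~ rho, a_t ~ pi(s_t,.),
   s_{t+1} ~ P(.|s_t,a_t)). *)
Fixpoint state_dist (P : S -> A -> S -> R) (rho : S -> R) (pi : S -> A -> R)
    (t : nat) (s : S) : R :=
  match t with
  | 0 => rho s
  | t'.+1 => \sum_s0 \sum_a0 state_dist P rho pi t' s0 * pi s0 a0 * P s0 a0 s
  end.

Definition traj_prob (P : S -> A -> S -> R) (rho : S -> R) (pi : S -> A -> R)
    (t : nat) (s : S) (a : A) : R :=
  state_dist P rho pi t s * pi s a.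

Definition occ (gamma : R) (P : S -> A -> S -> R) (rho : S -> R)
    (pi : S -> A -> R) (s : S) (a : A) : R :=
  limn (series (fun t => gamma ^+ t * traj_prob P rho pi t s a)).

Definition norm2 (f : S -> A -> R) : R :=
  Num.sqrt (\sum_s \sum_a f s a ^+ 2).

(* (Phi^T mu)_j for Phi = [phi_1 ... phi_nc]. *)
Definition featexp (nc : nat) (Phi : 'I_nc -> S -> A -> R) (mu : S -> A -> R)
    (j : 'I_nc) : R :=
  \sum_s \sum_a Phi j s a * mu s a.

Definition Vbeta (N nc : nat) (gamma : R) (P : 'I_N -> S -> A -> S -> R)
    (rho : S -> R) (Phi : 'I_nc -> S -> A -> R) (piE : 'I_N -> S -> A -> R)
    (beta : 'I_N -> R) (pi : S -> A -> R) : R :=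
  \sum_i beta i * \sum_j
     `|featexp Phi (occ gamma (P i) rho pi) j
       - featexp Phi (occ gamma (P i) rho (piE i)) j|.

End Defs.

From HB Require Import structures.
From mathcomp Require Import all_boot all_order all_algebra.
From mathcomp Require Import all_classical all_reals all_analysis.
From mathcomp Require Import lra.
Set Implicit Arguments.
Unset Strict Implicit.
Unset Printing Implicit Defensive.
Import Order.TTheory GRing.Theory Num.Theory.
Local Open Scope ring_scope.

(* Since every feature is bounded by 1, each feature gap
   |(Phi^T mu^pi1_i)_j - (Phi^T mu^pi2_i)_j| is at most the l1 distance of the
   occupation measures, which Cauchy-Schwarz bounds by sqrt(|S||A|) times their
   l2 distance, hence by sqrt(|S||A|) L ||pi1 - pi2||_2.  The reverse triangle
   inequality lets the nc features of each l1 norm add up, and the convex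
   weights beta average over the environments. *)

Lemma sqr_sum_norm_le (R : realFieldType) (T : finType) (g : T -> R) :
  (\sum_t `|g t|) ^+ 2 <= #|T|%:R * \sum_t g t ^+ 2.
Proof.
have amgm t u : `|g t| * `|g u| *+ 2 <= g t ^+ 2 + g u ^+ 2.
  have := sqr_ge0 (`|g t| - `|g u|).
  by rewrite sqrrB !real_normK ?num_real //; lra.
have double_sum :
    \sum_t \sum_u (g t ^+ 2 + g u ^+ 2) = (#|T|%:R * \sum_t g t ^+ 2) *+ 2.
  under eq_bigr => t _ do rewrite big_split /= sumr_const.
  by rewrite big_split /= sumr_const sumrMnl mulr2n mulr_natl.
have -> : (\sum_t `|g t|) ^+ 2 = \sum_t \sum_u `|g t| * `|g u|.
  by rewrite expr2 mulr_suml; apply: eq_bigr => t _; rewrite mulr_sumr.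
rewrite -(ler_pMn2r (_ : 0 < 2)%N) // -double_sum -sumrMnl.
apply: ler_sum => t _; rewrite -sumrMnl.
by apply: ler_sum => u _; apply: amgm.
Qed.

Lemma sum_norm_le_norm2 (R : realType) (S A : finType) (f : S -> A -> R) :
  \sum_s \sum_a `|f s a| <= Num.sqrt (#|S| * #|A|)%:R * norm2 f.
Proof.
rewrite /norm2 pair_bigA /= [X in _ <= _ * Num.sqrt X]pair_bigA /=.
rewrite -sqrtrM ?ler0n // -card_prod.
rewrite -[X in X <= _]ger0_norm ?sumr_ge0 // -sqrtr_sqr.
exact/ler_wsqrtr/sqr_sum_norm_le.
Qed.

Section FeatureExpectations.
Variables (R : realType) (S A : finType) (nc : nat).
Variable Phi : 'I_nc -> S -> A -> R.

Lemma featexpB (mu1 mu2 : S -> A -> R) (j : 'I_nc) :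
  featexp Phi mu1 j - featexp Phi mu2 j
  = featexp Phi (fun s a => mu1 s a - mu2 s a) j.
Proof.
rewrite /featexp -sumrB; apply: eq_bigr => s _.
by rewrite -sumrB; apply: eq_bigr => a _; rewrite mulrBr.
Qed.

Lemma norm_featexp_le (mu : S -> A -> R) (j : 'I_nc) :
  (forall s a, `|Phi j s a| <= 1) ->
  `|featexp Phi mu j| <= \sum_s \sum_a `|mu s a|.
Proof.
move=> Phi_le1; apply: le_trans (ler_norm_sum _ _ _) _.
apply: ler_sum => s _; apply: le_trans (ler_norm_sum _ _ _) _.
by apply: ler_sum => a _; rewrite normrM ler_piMl.
Qed.

End FeatureExpectations.

Lemma dist_sum_norm_subr (R : numDomainType) (I : finType) (x y z : I -> R) :
  `|\sum_i `|x i - z i| - \sum_i `|y i - z i| | <= \sum_i `|x i - y i|.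
Proof.
rewrite -sumrB; apply: le_trans (ler_norm_sum _ _ _) _.
apply: ler_sum => i _; apply: le_trans (ler_dist_dist _ _) _.
by rewrite opprB addrA subrK.
Qed.

Lemma dist_convex_comb_le (R : numDomainType) (I : finType)
    (beta u v : I -> R) (M : R) :
  (forall i, 0 <= beta i) -> \sum_i beta i = 1 ->
  (forall i, `|u i - v i| <= M) ->
  `|\sum_i beta i * u i - \sum_i beta i * v i| <= M.
Proof.
move=> beta_ge0 beta_sum uv_le; rewrite -sumrB.
apply: le_trans (ler_norm_sum _ _ _) _.
apply: (@le_trans _ _ (\sum_i beta i * M)); last first.
  by rewrite -mulr_suml beta_sum mul1r.
apply: ler_sum => i _.
by rewrite -mulrBr normrM ger0_norm // ler_wpM2l.
Qed.

Theorem lemma3 (R : realType) (S A : finType) (N nc : nat) (gamma : R)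
  (rho : S -> R) (P : 'I_N -> S -> A -> S -> R) (piE : 'I_N -> S -> A -> R)
  (Phi : 'I_nc -> S -> A -> R) (Lc : 'I_N -> R) :
  0 < gamma < 1 ->
  is_distr rho ->
  (forall i, is_kernel (P i)) ->
  (forall i, is_policy (piE i)) ->
  (forall j s a, `|Phi j s a| <= 1) ->
  (forall i, 0 < Lc i) ->
  (forall i (pi1 pi2 : S -> A -> R), is_policy pi1 -> is_policy pi2 ->
     norm2 (fun s a => occ gamma (P i) rho pi1 s a - occ gamma (P i) rho pi2 s a)
       <= Lc i * norm2 (fun s a => pi1 s a - pi2 s a)) ->
  let L := \big[Order.max/0]_(i < N) Lc i in
  forall (pi1 pi2 : S -> A -> R) (beta : 'I_N -> R),
    is_policy pi1 -> is_policy pi2 ->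
    (forall i, 0 <= beta i) -> \sum_i beta i = 1 ->
    `|Vbeta gamma P rho Phi piE beta pi1 - Vbeta gamma P rho Phi piE beta pi2|
      <= nc%:R * L * Num.sqrt (#|S| * #|A|)%:R * norm2 (fun s a => pi1 s a - pi2 s a).
Proof.
move=> _ _ _ _ Phi_le1 _ occ_lip L pi1 pi2 beta pol1 pol2 beta_ge0 beta_sum.
set d := norm2 _; set sq := Num.sqrt _.
have occ_gap i : \sum_s \sum_a
    `|occ gamma (P i) rho pi1 s a - occ gamma (P i) rho pi2 s a| <= sq * (L * d).
  apply: le_trans (sum_norm_le_norm2
    (fun s a => occ gamma (P i) rho pi1 s a - occ gamma (P i) rho pi2 s a)) _.
  rewrite ler_wpM2l ?sqrtr_ge0 //.
  apply: le_trans (occ_lip i pi1 pi2 pol1 pol2) _.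
  by rewrite ler_wpM2r ?sqrtr_ge0 //; apply: le_bigmax.
apply: dist_convex_comb_le => // i.
apply: le_trans (dist_sum_norm_subr _ _ _) _.
apply: (@le_trans _ _ (\sum_(j < nc) sq * (L * d))).
  apply: ler_sum => j _; rewrite featexpB.
  exact: le_trans (norm_featexp_le _ (Phi_le1 j)) (occ_gap i).
by rewrite sumr_const card_ord -[X in X <= _]mulr_natl !mulrA (mulrAC _ sq L).
Qed.
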